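(* For every integer $N\ge1$ there exists a function $\mathrm{Col}:\mathbb Z^+\times\mathrm{Chain}(N)\to\mathbb Z^+$ such that for every integer $k\ge0$ with $\log^{(k)}N\ge1$: (1) if $\mathcal A$ is a chain with $\mathrm{lgt}(\mathcal A)\ge 2k$, then for every $s\ge\mathrm{sz}(\mathcal A_{2k})$, $\mathrm{Col}(s,\mathcal A_{2k})\le 2^{6(s+1)}\log^{(k)}N$; (2) if $\mathcal A=\langle A_0,\dots\rangle$ and $\mathcal A'=\langle A'_0,\dots\rangle$ are chains of the same length, with that length at least $2k$, with $\mathrm{sz}(\mathcal A),\mathrm{sz}(\mathcal A')\le s$, $S^1(\mathcal A)\cap S^1(\mathcal A')\ne\emptyset$ and $A_0\ne A'_0$, then $\mathrm{Col}(s,\mathcal A_{2k})\ne\mathrm{Col}(s,\mathcal A'_{2k})$.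
   Context: A chain in $[N]=\{1,\dots,N\}$ is a finite sequence $\mathcal A=\langle A_0,\dots,A_k\rangle$ of subsets of $[N]$ with $|A_0|=1$ and $A_i\subseteq A_{i+1}$ for all $i$; if $A_0=\{w\}$, $w$ is the leader. $\mathrm{Chain}(N)$ is the set of all chains in $[N]$. The length is $\mathrm{lgt}(\mathcal A)=k$ and the size is $\mathrm{sz}(\mathcal A)=|A_k|$. For $i\le\mathrm{lgt}(\mathcal A)$, the prefix is $\mathcal A_i=\langle A_0,\dots,A_i\rangle$. For a chain $\mathcal A=\langle A_0,\dots,A_k\rangle$ and integer $d\ge0$, a chain $\mathcal B=\langle B_0,\dots,B_{k-d}\rangle$ is within distance $d$ of $\mathcal A$ if $A_{i-d}\subseteq B_i\subseteq A_{i+d}$ for all $i\in\{0,\dots,k-d\}$ (sets with negative index are the empty set); $S^d(\mathcal A)$ is the set of all chains within distance $d$ of $\mathcal A$. $\log^{(i)}$ is the $i$-fold iterated base-2 logarithm, $\log^{(0)}N=N$. *)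

From Stdlib Require Import Reals.
From mathcomp Require Import all_boot.
Set Implicit Arguments. Unset Strict Implicit. Unset Printing Implicit Defensive.

(* The ground set [N] = {1,...,N} is represented by 'I_N = {0,...,N-1}. *)

Definition is_chain (N : nat) (A : seq {set 'I_N}) : Prop :=
  [/\ 0 < size A,
      #|nth set0 A 0| = 1
    & forall i, i.+1 < size A -> nth set0 A i \subset nth set0 A i.+1].

Definition lgt (N : nat) (A : seq {set 'I_N}) : nat := (size A).-1.

Definition sz (N : nat) (A : seq {set 'I_N}) : nat := #|last set0 A|.

(* prefix A_i = <A_0,...,A_i> *)
Definition chain_prefix (N : nat) (A : seq {set 'I_N}) (i : nat) : seq {set 'I_N} :=
  take i.+1 A.

(* A_j with the convention that sets of negative index (j = i - d < 0) are empty *)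
Definition setA_minus (N : nat) (A : seq {set 'I_N}) (i d : nat) : {set 'I_N} :=
  if i < d then set0 else nth set0 A (i - d).

Definition within_dist (N : nat) (d : nat) (A B : seq {set 'I_N}) : Prop :=
  [/\ d <= lgt A, lgt B = lgt A - d
    & forall i, i <= lgt A - d ->
        setA_minus A i d \subset nth set0 B i /\ nth set0 B i \subset nth set0 A (i + d)].

Definition S_dist (N : nat) (d : nat) (A : seq {set 'I_N}) : seq {set 'I_N} -> Prop :=
  fun B => is_chain B /\ within_dist d A B.

Definition log2R (x : R) : R := Rdiv (ln x) (ln 2).
Definition iter_log (k : nat) (x : R) : R := iter k log2R x.

Definition pow2R (n : nat) : R := pow (IZR 2) n.

From Stdlib Require Import Reals Lra Lia.
From mathcomp Require Import all_boot zify.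
Set Implicit Arguments. Unset Strict Implicit. Unset Printing Implicit Defensive.
Delimit Scope R_scope with Re.

(* Fix the size bound s and put D + 1 = 5^s.  The color of the prefix of length
   2k of a chain is defined by induction on k.  At level 0 a chain is colored by
   its leader.  For the step, let A' be a neighbour of A, i.e. a chain of the same
   length with S^1(A) and S^1(A') intersecting; then A'_j ⊆ A_{j+2} and
   A_j ⊆ A'_{j+2}.  Hence the prefix A'_{2k} is determined by A_{2k+2} together
   with, for each x in A_{2k+2}, the difference of the entry times of x in A' and
   in A, a number in [0, 4] after a shift by 2 (decoding lemma).  So the prefix
   A_{2k+2} determines a list of at most 5^s colors of level k containing the
   colors of all neighbours of A.  A color-reduction step in the style of Linial,
   based on a code of M + 1 words of length (D + 1) a over an alphabet of size
   6 (D + 1) with pairwise agreements below a = up_log 2 (M + 2) (built greedily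
   by a volume argument), turns a color in [1, M] into one in
   [1, 6 (D + 1)^2 a] that still separates neighbours.  A final real estimate
   bounds the palette of level k by 2^(6(s+1)) log^(k) N. *)

Lemma INR_addn m n : INR (m + n) = (INR m + INR n)%Re.
Proof. exact: plus_INR. Qed.

Lemma INR_muln m n : INR (m * n) = (INR m * INR n)%Re.
Proof. exact: mult_INR. Qed.

Lemma INR_expn m n : INR (m ^ n) = (INR m ^ n)%Re.
Proof. by elim: n => [|n IH] //=; rewrite expnS INR_muln IH. Qed.

Lemma INR_leq m n : m <= n -> (INR m <= INR n)%Re.
Proof. by move/leP; apply: le_INR. Qed.

Lemma INR_ltn m n : m < n -> (INR m < INR n)%Re.
Proof. by move/ltP; apply: lt_INR. Qed.

Lemma leq_INR m n : (INR m <= INR n)%Re -> m <= n.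
Proof. by move=> le_mn; apply/leP; apply: INR_le. Qed.

(* A binomial estimate: 'C(d a, a) <= (3 d)^a.  It rests on a^a <= 3^a a!,
   itself a consequence of (1 + 1/a)^a <= e <= 3. *)

Lemma exp_pow (x : R) n : (exp x ^ n = exp (INR n * x))%Re.
Proof.
elim: n => [|n IH]; first by rewrite /= Rmult_0_l exp_0.
by rewrite [(_ ^ _)%Re]/= IH -exp_plus S_INR; congr exp; ring.
Qed.

Lemma succ_pow_le a : a.+1 ^ a <= 3 * a ^ a.
Proof.
case: a => [|a] //; apply: leq_INR; rewrite INR_muln !INR_expn.
set b := INR a.+1.
have b_gt0 : (0 < b)%Re by apply: lt_0_INR; apply/ltP.
have -> : INR a.+2 = (b * (1 + / b))%Re by rewrite S_INR -/b; field; lra.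
rewrite Rpow_mult_distr Rmult_comm; apply: Rmult_le_compat_r; first by apply: pow_le; lra.
have -> : INR 3 = 3%Re by rewrite /=; ring.
apply: Rle_trans exp_le_3.
apply: (@Rle_trans _ (exp (/ b) ^ a.+1)).
  apply: pow_incr; split; last exact: exp_ineq1_le.
  by have := Rinv_0_lt_compat _ b_gt0; lra.
by rewrite exp_pow -/b Rinv_r; lra.
Qed.

Lemma pow_le_fact a : a ^ a <= 3 ^ a * a`!.
Proof.
elim: a => [|a IH] //; rewrite expnS factS.
apply: (@leq_trans (a.+1 * (3 * a ^ a))); first by rewrite leq_mul2l succ_pow_le orbT.
by rewrite [X in _ <= X]mulnCA leq_mul2l expnS -mulnA leq_mul2l IH !orbT.
Qed.

Lemma bin_mul_le d a : 'C(d * a, a) <= (3 * d) ^ a.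
Proof.
rewrite -(leq_pmul2r (fact_gt0 a)) bin_ffact.
apply: (@leq_trans ((d * a) ^ a)).
  have -> : (d * a) ^ a = \prod_(i < a) (d * a) by rewrite prod_nat_const card_ord.
  rewrite ffact_prod; apply: leq_prod => i _; apply: leq_subr.
by rewrite !expnMn [3 ^ a * d ^ a]mulnC -mulnA leq_mul2l pow_le_fact orbT.
Qed.

Lemma card_bigcup_seq_le (I : Type) (T : finType) (r : seq I) (P : pred I) (F : I -> {set T}) :
  #|\bigcup_(i <- r | P i) F i| <= \sum_(i <- r | P i) #|F i|.
Proof.
elim: r => [|i r IH]; first by rewrite !big_nil cards0.
rewrite !big_cons; case: (P i) => //.
by apply: leq_trans (leq_card_setU _ _).1 _; apply: leq_add.
Qed.

Lemma mem_bigcup_seq (I : eqType) (T : finType) (r : seq I) (F : I -> {set T}) i x :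
  i \in r -> x \in F i -> x \in \bigcup_(j <- r) F j.
Proof.
elim: r => [|j r IH] //; rewrite inE big_cons inE => /orP [/eqP <- -> //| ir xF].
by rewrite IH ?orbT.
Qed.

Lemma sum_le_size (T : eqType) (r : seq T) (f : T -> nat) K :
  (forall x, x \in r -> f x <= K) -> \sum_(x <- r) f x <= size r * K.
Proof.
elim: r => [|x r IH] fK; first by rewrite big_nil.
rewrite big_cons mulSn leq_add ?fK ?mem_head // IH // => y yr.
by rewrite fK // inE yr orbT.
Qed.

Section Agreement.
Variables n q : nat.
Local Notation word := {ffun 'I_n -> 'I_q}.
Implicit Types v w : word.

Definition agreement v w : {set 'I_n} := [set i | v i == w i].

Lemma agreementC v w : agreement v w = agreement w v.
Proof. by apply/setP => i; rewrite !inE eq_sym. Qed.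

Lemma card_agree_on w (S : {set 'I_n}) :
  #|[set v : word | [forall i in S, v i == w i]]| = q ^ (n - #|S|).
Proof.
pose F i := if i \in S then pred1 (w i) else predT.
have -> : #|[set v : word | [forall i in S, v i == w i]]| = #|(family F : simpl_pred _)|.
  apply: eq_card => v; rewrite inE; apply/forall_inP/familyP => vS i.
    by rewrite /F; case: ifP => // iS; rewrite inE vS.
  by move=> iS; have := vS i; rewrite /F iS inE.
rewrite card_family foldrE big_map big_enum /=.
rewrite (eq_bigr (fun i => if i \in ~: S then q else 1)); last first.
  by move=> i _; rewrite /F inE; case: (i \in S); rewrite /= ?card1 ?card_ord.
by rewrite -big_mkcond /= prod_nat_const cardsCs card_ord setCK.
Qed.

(* The "ball" of words agreeing with w in at least a coordinates: choose the
   a coordinates, the remaining n - a letters are free. *)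
Lemma card_agreement_ge w a :
  #|[set v : word | a <= #|agreement v w|]| <= 'C(n, a) * q ^ (n - a).
Proof.
pose Fix (S : {set 'I_n}) := [set v : word | [forall i in S, v i == w i]].
apply: (@leq_trans #|\bigcup_(S in [set S : {set 'I_n} | #|S| == a]) Fix S|).
  apply/subset_leq_card/subsetP => v; rewrite inE => /card_geqP [s [us ss sub]].
  apply/bigcupP; exists [set x in s]; first by rewrite inE cardsE (card_uniqP us) ss.
  by rewrite inE; apply/forall_inP => i; rewrite inE => /sub; rewrite inE.
apply: leq_trans (card_bigcup_seq_le _ _ _) _.
rewrite (eq_bigr (fun _ => q ^ (n - a))); last first.
  by move=> S; rewrite inE => /eqP cardS; rewrite card_agree_on cardS.
by rewrite sum_nat_const card_draws card_ord mulnC.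
Qed.

End Agreement.

(* To separate a color x in [0, M] from at most D
   other colors we use M + 1 words of length (D + 1) a over an alphabet of size
   6 (D + 1), any two of which agree in fewer than a = up_log 2 (M + 2)
   coordinates: the at most D other words then agree with the word of x in at
   most D (a - 1) < (D + 1) a coordinates. *)

Definition threshold (M : nat) : nat := up_log 2 M.+2.
Definition code_len (D M : nat) : nat := D.+1 * threshold M.
Definition alphabet (D : nat) : nat := 6 * D.+1.
Definition word (D M : nat) : Type := {ffun 'I_(code_len D M) -> 'I_(alphabet D)}.

Definition is_code D M (f : {ffun 'I_M.+1 -> word D M}) : bool :=
  [forall i, forall j, (i != j) ==> (#|agreement (f i) (f j)| < threshold M)].

Lemma threshold_gt0 M : 0 < threshold M.
Proof. by rewrite up_log_gt0. Qed.

Lemma threshold_le_code_len D M : threshold M <= code_len D M.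
Proof. by rewrite leq_pmull. Qed.

(* M balls of radius threshold M do not cover all words: this is the volume
   bound behind the greedy construction of a code. *)
Lemma balls_small D M :
  M * ('C(code_len D M, threshold M) * alphabet D ^ (code_len D M - threshold M))
    < alphabet D ^ code_len D M.
Proof.
set a := threshold M; set n := code_len D M.
have -> : alphabet D ^ n = alphabet D ^ a * alphabet D ^ (n - a).
  by rewrite -expnD subnKC // threshold_le_code_len.
rewrite mulnA ltn_pmul2r ?expn_gt0 ?muln_gt0 //.
apply: (@leq_ltn_trans (M * (3 * D.+1) ^ a)); first by rewrite leq_mul2l bin_mul_le orbT.
have -> : alphabet D ^ a = 2 ^ a * (3 * D.+1) ^ a by rewrite -expnMn mulnA.
rewrite ltn_pmul2r ?expn_gt0 ?muln_gt0 //.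
exact: leq_trans (up_logP _ (isT : 1 < 2)).
Qed.

(* Greedy construction of j <= M + 1 words with pairwise agreements below the
   threshold: fewer than M + 1 such words extend by one more, since the balls
   around them do not cover all words. *)
Lemma greedy_code D M j : j <= M.+1 ->
  exists r : seq (word D M), size r = j /\
    pairwise (fun v w : word D M => #|agreement v w| < threshold M) r.
Proof.
elim: j => [|j IH] jM; first by exists [::].
have [r [size_r far_r]] := IH (ltnW jM).
have [v v_far] : exists v : word D M, all (fun w => #|agreement v w| < threshold M) r.
  apply/existsP/contraT => /existsPn all_close.
  pose ball (w : word D M) := [set v : word D M | threshold M <= #|agreement v w|].
  have cover : [set: word D M] \subset \bigcup_(w <- r) ball w.
    apply/subsetP => v _; have := all_close v; rewrite -has_predC => /hasP [w wr].
    by rewrite /= -leqNgt => vw; apply: (mem_bigcup_seq wr); rewrite inE.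
  have := leq_trans (subset_leq_card cover) (card_bigcup_seq_le _ _ _).
  move/leq_trans/(_ (sum_le_size (fun w _ => card_agreement_ge w (threshold M)))).
  rewrite cardsT card_ffun !card_ord leqNgt => /negP [].
  by apply: leq_ltn_trans (balls_small D M); rewrite size_r leq_mul2r -ltnS jM orbT.
by exists (v :: r); rewrite pairwise_cons v_far far_r /= size_r.
Qed.

Lemma code_exists D M : exists f : {ffun 'I_M.+1 -> word D M}, is_code f.
Proof.
have [r [size_r far_r]] := greedy_code D (leqnn M.+1).
pose w0 : word D M := [ffun _ => ord0].
exists [ffun i : 'I_M.+1 => nth w0 r i].
have far : forall i j : 'I_M.+1, i < j -> #|agreement (nth w0 r i) (nth w0 r j)| < threshold M.
  by move=> i j ij; apply: (pairwiseP w0 far_r) => //; rewrite inE size_r.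
apply/forallP => i; apply/forallP => j; apply/implyP => ij; rewrite !ffunE.
case: (ltngtP i j) => [| |/val_inj eq_ij]; [exact: far | rewrite agreementC; exact: far |].
by rewrite eq_ij eqxx in ij.
Qed.

(* A color x in [0, M] together with a list ys of at most
   D + 1 colors in [0, M] is mapped to the pair (i, c_x(i)) encoded as a number,
   where c is a fixed code and i a coordinate at which the codeword of x differs
   from the codewords of all the other colors of ys. *)

Definition code D M : {ffun 'I_M.+1 -> word D M} := xchoose (code_exists D M).
Arguments code : clear implicits.

Lemma code_is_code D M : is_code (code D M).
Proof. exact: xchooseP. Qed.

Definition separates D M (x : nat) (ys : seq nat) (i : 'I_(code_len D M)) : bool :=
  all (fun y => (y == x) || (code D M (inord y) i != code D M (inord x) i)) ys.
Arguments separates : clear implicits.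

Definition reduce_color D M (x : nat) (ys : seq nat) : nat :=
  if [pick i | separates D M x ys i] is Some i
  then i * alphabet D + code D M (inord x) i + 1 else 1.

Lemma reduce_color_gt0 D M x ys : 0 < reduce_color D M x ys.
Proof. by rewrite /reduce_color; case: pickP => [i _|_]; rewrite ?addn1. Qed.

Lemma reduce_color_le D M x ys : reduce_color D M x ys <= code_len D M * alphabet D.
Proof.
have n_gt0 : 0 < code_len D M by rewrite muln_gt0 threshold_gt0.
rewrite /reduce_color; case: pickP => [i _|_]; last by rewrite muln_gt0 n_gt0.
rewrite addn1 -addnS; apply: (@leq_trans (i.+1 * alphabet D)).
  by rewrite mulSn [alphabet D + _]addnC leq_add2l ltn_ord.
by rewrite leq_mul2r ltn_ord orbT.
Qed.

(* A separating coordinate exists: each of the at most D other colors of ys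
   agrees with x in fewer than threshold M of the (D + 1) threshold M coordinates. *)
Lemma separates_exists D M x ys :
  x <= M -> size ys <= D.+1 -> all (fun y => y <= M) ys ->
  exists i, separates D M x ys i.
Proof.
move=> xM size_ys ysM; set c := code D M.
pose bad := \bigcup_(y <- [seq y <- ys | y != x]) agreement (c (inord y)) (c (inord x)).
have bad_small : #|bad| < code_len D M.
  apply: leq_ltn_trans (card_bigcup_seq_le _ _ _) _.
  apply: leq_ltn_trans (sum_le_size (K := (threshold M).-1) _) _.
    move=> y; rewrite mem_filter => /andP [yx yys].
    have yM : y <= M by apply: (allP ysM).
    rewrite -ltnS prednK ?threshold_gt0 //.
    move/forallP/(_ (inord y))/forallP/(_ (inord x))/implyP: (code_is_code D M); apply.
    by apply: contra yx => /eqP/(congr1 val); rewrite /= !inordK // => ->.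
  apply: (@leq_ltn_trans (D.+1 * (threshold M).-1)).
    by rewrite leq_mul2r (leq_trans _ size_ys) ?orbT // size_filter count_size.
  by rewrite ltn_pmul2l // prednK ?threshold_gt0.
have [i i_good] : exists i, i \notin bad.
  apply/existsP/contraT => /existsPn all_bad.
  have : #|[set: 'I_(code_len D M)]| <= #|bad|.
    by apply/subset_leq_card/subsetP => i _; have := all_bad i; rewrite negbK.
  by rewrite cardsT card_ord leqNgt bad_small.
exists i; apply/allP => y yys; apply/orP; case: (eqVneq y x) => yx; [by left | right].
apply: contra i_good => /eqP yi; apply: (mem_bigcup_seq (i := y)).
  by rewrite mem_filter yx.
by rewrite inE yi.
Qed.

(* Two distinct colors x and y, each occurring in the list of the other, get
   distinct reduced colors: equal codes would force the same coordinate i and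
   the same letter c_x(i) = c_y(i), contradicting that i separates x from y. *)
Lemma reduce_color_separates D M x y ys ys' :
  x <= M -> y <= M -> x != y -> y \in ys -> x \in ys' ->
  size ys <= D.+1 -> size ys' <= D.+1 ->
  all (fun z => z <= M) ys -> all (fun z => z <= M) ys' ->
  reduce_color D M x ys != reduce_color D M y ys'.
Proof.
move=> xM yM xy yys xys' size_ys size_ys' ysM ys'M.
rewrite /reduce_color; case: pickP => [i sep_i|none]; last first.
  by have [j] := separates_exists xM size_ys ysM; rewrite none.
case: pickP => [i' _|none]; last first.
  by have [j] := separates_exists yM size_ys' ys'M; rewrite none.
rewrite !addn1 eqSS; apply/negP => /eqP same.
have q_gt0 : 0 < alphabet D by rewrite muln_gt0.
have ii' : i = i'.
  apply: val_inj; have := congr1 (divn^~ (alphabet D)) same.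
  by rewrite !divnMDl // !divn_small ?ltn_ord // !addn0.
move: same; rewrite -ii' => /addnI/val_inj same.
by move/allP/(_ y yys): sep_i; rewrite eq_sym (negbTE xy) same eqxx.
Qed.

Section Chains.
Variable N : nat.
Implicit Types A B : seq {set 'I_N}.

Lemma chain_size A : is_chain A -> size A = (lgt A).+1.
Proof. by case=> size_A _ _; rewrite /lgt prednK. Qed.

Lemma chain_sub A i j : is_chain A -> i <= j -> j < size A -> nth set0 A i \subset nth set0 A j.
Proof.
case=> _ _ A_incr; elim: j => [|j IH]; first by rewrite leqn0 => /eqP ->.
rewrite leq_eqVlt => /orP [/eqP -> //| ij] j_lt.
exact: subset_trans (IH ij (ltnW j_lt)) (A_incr _ j_lt).
Qed.

Lemma chain_card_le_sz A i : is_chain A -> i < size A -> #|nth set0 A i| <= sz A.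
Proof.
move=> chA i_lt; rewrite /sz -nth_last; apply/subset_leq_card/chain_sub => //.
  by rewrite -ltnS (chain_size chA) -(chain_size chA).
by rewrite (chain_size chA).
Qed.

(* If A and A' of the same length have a common chain B within distance 1,
   then A'_j ⊆ B_{j+1} ⊆ A_{j+2}. *)
Lemma neighbour_sub A A' B j :
  S_dist 1 A B -> S_dist 1 A' B -> lgt A = lgt A' -> j.+2 < size A ->
  nth set0 A' j \subset nth set0 A j.+2.
Proof.
move=> [_ [_ _ AB]] [_ [_ _ A'B]] lgtAA' j_lt.
have j1 : j.+1 <= lgt A - 1 by rewrite /lgt; lia.
have [_ B_A] := AB _ j1.
have j1' : j.+1 <= lgt A' - 1 by rewrite -lgtAA'.
have [A'_B _] := A'B _ j1'.
by move: A'_B B_A; rewrite /setA_minus subn1 addn1 /=; apply: subset_trans.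
Qed.

End Chains.

(* Entry times.  For an increasing sequence of sets, membership of x in the
   j-th set is monotone in j, hence determined by the first index at which x
   appears. *)

Lemma find_monotone (f : nat -> bool) len :
  (forall j, j.+1 < len -> f j -> f j.+1) ->
  forall j, j < len -> f j = (find f (iota 0 len) <= j).
Proof.
move=> f_incr j j_lt; apply/idP/idP => [fj|le].
  by rewrite leqNgt; apply/negP => /(before_find 0); rewrite nth_iota // add0n fj.
set e := find f (iota 0 len) in le *.
have e_lt : e < len by apply: leq_ltn_trans le j_lt.
have f_has : has f (iota 0 len) by rewrite has_find size_iota.
have := nth_find 0 f_has; rewrite nth_iota // add0n -/e => fe.
elim: j le j_lt => [|j IH]; first by rewrite leqn0 => /eqP <-.
rewrite leq_eqVlt => /orP [/eqP <- //| lt] j_lt.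
by apply: f_incr => //; apply: IH (ltnW j_lt).
Qed.

Definition entry N (A : seq {set 'I_N}) (len : nat) (x : 'I_N) : nat :=
  find (fun j => x \in nth set0 A j) (iota 0 len).

(* Given sets P_0, ..., P_{m+2} and offsets t (one for each
   element x of P_{m+2}, listed in the order of enum), build the sequence
   Q_0, ..., Q_m where x ∈ Q_j iff entry_P(x) + t_x <= j + 2.  Every increasing
   Q with Q_j ⊆ P_{j+2} and P_j ⊆ Q_{j+2} arises from offsets in [0, 4]. *)

Definition decode N (P : seq {set 'I_N}) (m : nat) (t : seq nat) : seq {set 'I_N} :=
  mkseq (fun j => [set x in nth set0 P m.+2 |
     entry P m.+3 x + nth 0 t (index x (enum (nth set0 P m.+2))) <= j + 2]) m.+1.

Fixpoint offsets (l : nat) : seq (seq nat) :=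
  if l is l'.+1 then [seq i :: t | i <- iota 0 5, t <- offsets l'] else [:: [::]].

Lemma size_offsets l : size (offsets l) = 5 ^ l.
Proof. by elim: l => [|l IH] //=; rewrite !size_cat !size_map IH expnS /=; lia. Qed.

Lemma mem_offsets t : all (fun i => i < 5) t -> t \in offsets (size t).
Proof.
elim: t => [|i t IH] //= /andP [i_lt /IH t_in].
by case: i i_lt => [|[|[|[|[|i]]]]] // _; rewrite !mem_cat map_f ?orbT.
Qed.

Section Decode.
Variables (N m : nat) (P Q : seq {set 'I_N}).
Hypothesis P_incr : forall j, j < m.+2 -> nth set0 P j \subset nth set0 P j.+1.
Hypothesis size_Q : size Q = m.+1.
Hypothesis Q_incr : forall j, j < m -> nth set0 Q j \subset nth set0 Q j.+1.
Hypothesis Q_P : forall j, j <= m -> nth set0 Q j \subset nth set0 P j.+2.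
Hypothesis P_Q : forall j, j.+2 <= m -> nth set0 P j \subset nth set0 Q j.+2.

Let top := nth set0 P m.+2.
Let eP x := entry P m.+3 x.
Let eQ x := entry Q m.+1 x.

Let memP x := find_monotone (f := fun j => x \in nth set0 P j) (len := m.+3)
   (fun j j_lt x_in => subsetP (P_incr j_lt) x x_in).
Let memQ x := find_monotone (f := fun j => x \in nth set0 Q j) (len := m.+1)
   (fun j j_lt x_in => subsetP (Q_incr j_lt) x x_in).

Lemma entryQ_le x : eQ x <= m.+1.
Proof. by apply: leq_trans (find_size _ _) _; rewrite size_iota. Qed.

Lemma entryP_le_entryQ x : x \in top -> eP x <= eQ x + 2.
Proof.
move=> x_top; have eP_top : eP x <= m.+2 by rewrite -(memP x).
case: (ltnP (eQ x) m.+1) => eQ_lt; last by rewrite addn2 (leq_trans eP_top) // !ltnS ltnW.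
have := subsetP (Q_P (eQ_lt : eQ x <= m)) x; rewrite (memQ x) // => /(_ (leqnn _)).
by rewrite (memP x) // addn2.
Qed.

Lemma entryQ_le_entryP x : x \in top -> eQ x <= eP x + 2.
Proof.
move=> x_top; have eP_top : eP x <= m.+2 by rewrite -(memP x).
case: (leqP (eP x).+2 m) => eP_lt; last by rewrite addn2 (leq_trans (entryQ_le x)).
have := subsetP (P_Q eP_lt) x; rewrite (memP x) ?(leq_trans eP_lt) // => /(_ (leqnn _)).
by rewrite (memQ x) // addn2.
Qed.

(* The offsets t_x = eQ(x) + 2 - eP(x) decode to Q. *)
Lemma decode_onto : exists2 t, t \in offsets #|top| & decode P m t = Q.
Proof.
exists [seq eQ x + 2 - eP x | x <- enum top].
  rewrite cardE -(size_map (fun x => eQ x + 2 - eP x)); apply: mem_offsets.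
  apply/allP => i /mapP [x]; rewrite mem_enum => x_top ->.
  by have := entryQ_le_entryP x_top; lia.
apply: (@eq_from_nth _ set0); first by rewrite size_mkseq size_Q.
rewrite size_mkseq => j j_lt; rewrite nth_mkseq //; apply/setP => x; rewrite inE.
case: (boolP (x \in top)) => x_top /=.
  rewrite (nth_map x) ?index_mem ?mem_enum // nth_index ?mem_enum //.
  have := entryP_le_entryQ x_top; rewrite -/(eP x) => eP_eQ.
  by rewrite (_ : eP x + _ = eQ x + 2); [rewrite leq_add2r (memQ x) | lia].
apply/esym/negP => x_Q; apply/negP: x_top; rewrite negbK.
have := subsetP (Q_P (j_lt : j <= m)) x x_Q; rewrite !(memP x) // => le.
by rewrite (leq_trans le).
Qed.

End Decode.

(* Level 0 colors a
   chain by its leader (shifted to be positive); level k + 1 reduces the level-k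
   color of the prefix of length 2k against the level-k colors of all decodings
   of the prefix of length 2k + 2.  palette N s k bounds the colors of level k. *)

Fixpoint palette (N s k : nat) : nat :=
  if k is k'.+1 then code_len (5 ^ s).-1 (palette N s k') * alphabet (5 ^ s).-1 else N.

Fixpoint color N (s k : nat) (P : seq {set 'I_N}) : nat :=
  match k with
  | 0 => if [pick x in nth set0 P 0] is Some x then x.+1 else 1
  | k'.+1 => reduce_color (5 ^ s).-1 (palette N s k') (color s k' (take k'.*2.+1 P))
       [seq color s k' (decode P k'.*2 t) | t <- offsets #|nth set0 P k'.*2.+2|]
  end.

Lemma color_gt0 N s k (P : seq {set 'I_N}) : 0 < color s k P.
Proof. by case: k => [|k] /=; [case: pickP | exact: reduce_color_gt0]. Qed.

Lemma color_le N s k (P : seq {set 'I_N}) : 0 < N -> color s k P <= palette N s k.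
Proof.
case: k => [|k] N_gt0 /=; last exact: reduce_color_le.
by case: pickP => [x _|_]; first exact: ltn_ord.
Qed.

Lemma neighbour_decoded N s k (A A' B : seq {set 'I_N}) :
  is_chain A -> is_chain A' -> lgt A = lgt A' -> k.*2.+2 <= lgt A ->
  S_dist 1 A B -> S_dist 1 A' B ->
  color s k (take k.*2.+1 A') \in
    [seq color s k (decode (take k.*2.+3 A) k.*2 t) | t <- offsets #|nth set0 (take k.*2.+3 A) k.*2.+2|].
Proof.
move=> chA chA' lgtAA' k_lt AB A'B.
have size_A := chain_size chA; have size_A' := chain_size chA'.
suff [t t_in <-] : exists2 t, t \in offsets #|nth set0 (take k.*2.+3 A) k.*2.+2| &
    decode (take k.*2.+3 A) k.*2 t = take k.*2.+1 A' by exact: map_f.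
apply: decode_onto.
- move=> j j_lt; rewrite !nth_take ?(ltn_trans j_lt) //.
  by apply: chain_sub => //; rewrite size_A; lia.
- by rewrite size_take size_A' -lgtAA'; case: ifP => //; lia.
- move=> j j_lt; rewrite !nth_take //; try lia.
  by apply: chain_sub => //; rewrite size_A' -lgtAA'; lia.
- move=> j j_le; rewrite !nth_take //; try lia.
  by apply: (neighbour_sub AB A'B lgtAA'); rewrite size_A; lia.
- move=> j j_lt; rewrite !nth_take //; try lia.
  by apply: (neighbour_sub A'B AB (esym lgtAA')); rewrite size_A' -lgtAA'; lia.
Qed.

Lemma color_separates N s k (A A' B : seq {set 'I_N}) : 0 < N ->
  is_chain A -> is_chain A' -> lgt A = lgt A' -> k.*2 <= lgt A ->
  sz A <= s -> sz A' <= s -> S_dist 1 A B -> S_dist 1 A' B ->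
  nth set0 A 0 != nth set0 A' 0 ->
  color s k (take k.*2.+1 A) != color s k (take k.*2.+1 A').
Proof.
move=> N_gt0; elim: k A A' => [|k IH] A A' chA chA' lgtAA' k_le szA szA' AB A'B leaders.
  rewrite /= !nth_take //.
  case: (chA) => _ /eqP /cards1P [w A0] _; case: (chA') => _ /eqP /cards1P [w' A'0] _.
  rewrite A0 A'0 in leaders *.
  case: pickP => [x|none]; last by have := none w; rewrite set11.
  case: pickP => [x'|none]; last by have := none w'; rewrite set11.
  rewrite !inE => /eqP -> /eqP ->.
  by apply: contra leaders => /eqP [/val_inj ->].
have size_A := chain_size chA; have size_A' := chain_size chA'.
have few_decodings (C : seq {set 'I_N}) : is_chain C -> k.*2.+2 < size C -> sz C <= s ->
    size [seq color s k (decode (take k.*2.+3 C) k.*2 t)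
           | t <- offsets #|nth set0 (take k.*2.+3 C) k.*2.+2|] <= (5 ^ s).-1.+1.
  move=> chC C_lt szC; rewrite size_map size_offsets prednK ?expn_gt0 // leq_exp2l //.
  by rewrite nth_take // (leq_trans _ szC) // chain_card_le_sz.
rewrite /= !take_takel ?doubleS; try lia.
apply: reduce_color_separates; rewrite ?color_le //.
- by apply: IH => //; lia.
- exact: neighbour_decoded chA chA' lgtAA' k_le AB A'B.
- by apply: neighbour_decoded chA' chA (esym lgtAA') _ A'B AB; rewrite -lgtAA'.
- by apply: few_decodings; rewrite ?size_A.
- by apply: few_decodings; rewrite ?size_A' -?lgtAA'.
- by apply/allP => z /mapP [t _ ->]; apply: color_le.
- by apply/allP => z /mapP [t _ ->]; apply: color_le.
Qed.

(* With C = 2^(6(s+1)) the palette at level k is at most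
   C log^(k) N: one step multiplies by 6 (5^s)^2 and replaces the old palette
   M <= C L by its threshold up_log 2 (M + 2), which is at most log2 L + 6 s + 8. *)

Lemma palette_step N s k :
  palette N s k.+1 = 6 * 5 ^ s * 5 ^ s * threshold (palette N s k).
Proof. by rewrite /= /code_len /alphabet prednK ?expn_gt0 //; lia. Qed.

(* The constant factor of one step is absorbed by C. *)
Lemma palette_const_le s : 6 * 5 ^ s * 5 ^ s * (6 * s + 9) <= 2 ^ (6 * s.+1).
Proof.
elim: s => [|s IH] //.
have -> : 2 ^ (6 * s.+2) = 64 * 2 ^ (6 * s.+1) by rewrite (_ : 64 = 2 ^ 6) // -expnD; congr (_ ^ _); lia.
apply: leq_trans (leq_mul (leqnn 64) IH); rewrite expnS; set p := 5 ^ s; nia.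
Qed.

Lemma ln2_gt0 : (0 < ln 2)%Re.
Proof. by have := ln_lt_2; lra. Qed.

Lemma log2R_ge1 (L : R) : (1 <= log2R L)%Re -> (2 <= L)%Re.
Proof.
rewrite /log2R => L_ge; have l2 := ln2_gt0.
have lnL : (ln 2 <= ln L)%Re.
  have -> : ln L = (ln L / ln 2 * ln 2)%Re by field; lra.
  by nra.
have L_gt0 : (0 < L)%Re.
  case: (Rlt_le_dec 0 L) => // L_le.
  have ln0 : ln L = 0%Re by rewrite /ln; case: Rlt_dec => // ?; exfalso; lra.
  by lra.
case: (Rlt_le_dec L 2) => // L_lt.
by have := ln_increasing _ _ L_gt0 L_lt; lra.
Qed.

Lemma log2R_gt (d : nat) (L : R) : (2 ^ d < L)%Re -> (INR d < log2R L)%Re.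
Proof.
move=> dL; have l2 := ln2_gt0.
have pow_gt0 : (0 < 2 ^ d)%Re by apply: pow_lt; lra.
have := ln_increasing _ _ pow_gt0 dL; rewrite ln_pow; last lra.
rewrite /log2R => ln_lt; apply: (Rmult_lt_reg_r (ln 2)) => //.
by have -> : (ln L / ln 2 * ln 2 = ln L)%Re by field; lra.
Qed.

Lemma threshold_le_log (M s : nat) (L : R) :
  (INR M <= pow2R (6 * (s + 1)) * L)%Re -> (1 <= log2R L)%Re ->
  (INR (threshold M) <= log2R L + INR (6 * s + 8))%Re.
Proof.
move=> ML logL; have L_ge2 := log2R_ge1 logL.
case: (leqP (threshold M) (6 * s + 8)) => small; first by have := INR_leq small; lra.
set d := threshold M - (6 * s + 8).
have thr_d : threshold M = d + (6 * s + 8) by rewrite /d subnK // ltnW.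
have := up_log_gtn (isT : 1 < 2) (isT : 1 < M.+2).
rewrite -/(threshold M) thr_d (_ : (d + _).-1 = d + 6 * (s + 1) + 1); last lia.
move/INR_ltn; rewrite INR_expn (pow_add _ (d + _)) (pow_add _ d).
have -> : INR 2 = 2%Re by rewrite /=; ring.
have -> : INR M.+2 = (INR M + 2)%Re by rewrite !S_INR; ring.
rewrite /pow2R in ML; set C := (2 ^ (6 * (s + 1)))%Re in ML *.
have C_ge1 : (1 <= C)%Re by apply: pow_R1_Rle; lra.
have pow_gt0 : (0 < 2 ^ d)%Re by apply: pow_lt; lra.
move=> pow_lt; have dL : (2 ^ d < L)%Re by nra.
by have := log2R_gt dL; rewrite INR_addn; lra.
Qed.

Lemma palette_le N s k : (1 <= iter_log k (INR N))%Re ->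
  (INR (palette N s k) <= pow2R (6 * (s + 1)) * iter_log k (INR N))%Re.
Proof.
have C_ge1 : (1 <= pow2R (6 * (s + 1)))%Re by apply: pow_R1_Rle; lra.
elim: k => [|k IH] logk; first by rewrite /= in logk *; nra.
have logk1 : (1 <= log2R (iter_log k (INR N)))%Re by [].
have L_ge2 := log2R_ge1 logk1.
have thr := threshold_le_log (IH ltac:(lra)) logk1.
rewrite palette_step INR_muln.
change (iter_log k.+1 (INR N)) with (log2R (iter_log k (INR N))).
set l := log2R _ in logk1 thr *.
have two : INR 2 = 2%Re by rewrite /=; ring.
have K_le := INR_leq (palette_const_le s).
rewrite INR_muln INR_expn two addnS S_INR in K_le.
set K := INR (6 * 5 ^ s * 5 ^ s) in K_le *; have K_ge0 : (0 <= K)%Re by apply: pos_INR.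
set E := INR (6 * s + 8) in K_le thr; have E_ge0 : (0 <= E)%Re by apply: pos_INR.
apply: (@Rle_trans _ (K * (l + E))); first by apply: Rmult_le_compat_l.
have KE_ge0 : (0 <= K * E)%Re by apply: Rmult_le_pos.
apply: (@Rle_trans _ (K * (E + 1) * l)); first by nra.
by rewrite /pow2R addn1; apply: Rmult_le_compat_r; lra.
Qed.

Lemma chain_prefix_even N (A : seq {set 'I_N}) k :
  is_chain A -> 2 * k <= lgt A ->
  chain_prefix A (2 * k) = take k.*2.+1 A /\ (lgt (chain_prefix A (2 * k)))./2 = k.
Proof.
move=> chA k_le; rewrite /chain_prefix /lgt mul2n; split => //.
have -> : size (take k.*2.+1 A) = k.*2.+1.
  by rewrite size_take (chain_size chA); case: ifP => //; lia.
by rewrite /= doubleK.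
Qed.

Unset Implicit Arguments.

Theorem mainTheorem11 (N : nat) (hN : 1 <= N) :
  exists Col : nat -> seq {set 'I_N} -> nat,
    (* Col : Z^+ x Chain(N) -> Z^+ *)
    (forall (s : nat) (A : seq {set 'I_N}), 0 < s -> is_chain A -> 0 < Col s A) /\
    (forall k : nat, Rle (IZR 1) (iter_log k (INR N)) ->
      (* (1) *)
      (forall (A : seq {set 'I_N}) (s : nat),
         is_chain A -> 2 * k <= lgt A -> sz (chain_prefix A (2 * k)) <= s ->
         Rle (INR (Col s (chain_prefix A (2 * k))))
             (Rmult (pow2R (6 * (s + 1))) (iter_log k (INR N)))) /\
      (* (2) *)
      (forall (A A' : seq {set 'I_N}) (s : nat),
         is_chain A -> is_chain A' -> lgt A = lgt A' -> 2 * k <= lgt A ->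
         sz A <= s -> sz A' <= s ->
         (exists B, S_dist 1 A B /\ S_dist 1 A' B) ->
         nth set0 A 0 != nth set0 A' 0 ->
         Col s (chain_prefix A (2 * k)) != Col s (chain_prefix A' (2 * k)))).
Proof.
exists (fun s P => color s (lgt P)./2 P); split => [s A _ _|k logk]; first exact: color_gt0.
split=> [A s chA k_le _ | A A' s chA chA' lgtAA' k_le szA szA' [B [AB A'B]] leaders].
  have [-> ->] := chain_prefix_even chA k_le.
  exact: Rle_trans (INR_leq (color_le _ _ _ hN)) (palette_le s logk).
have [-> ->] := chain_prefix_even chA k_le.
have k_le' : 2 * k <= lgt A' by rewrite -lgtAA'.
have [-> ->] := chain_prefix_even chA' k_le'.
by apply: (color_separates hN chA chA' lgtAA' _ szA szA' AB A'B leaders); rewrite -mul2n.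
Qed.
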